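(* Let $(A,E,\varepsilon,\tau)$ be an analytical $B$-$B$-non-commutative probability space. If $\widetilde{E}:L_2(A,\tau)\to L_2(B,\tau_B)$ denotes the orthogonal projection, then $\widetilde{E}(a) = \widehat{E(a)}$ for all $a \in A$. In particular, when $\tau_B$ is faithful, $\widetilde{E}$ extends $E$.
   Context: An analytical $B$-$B$-non-commutative probability space $(A,E,\varepsilon,\tau)$ consists of a $B$-$B$-non-commutative probability space $(A,E,\varepsilon)$ (with $L_b=\varepsilon(b\otimes 1_B)$, $R_b=\varepsilon(1_B\otimes b)$, left algebra $A_\ell$ and right algebra $A_r$) together with a state $\tau:A\to\mathbb{C}$ compatible with $E$ (i.e. $\tau(a)=\tau(L_{E(a)})=\tau(R_{E(a)})$ for all $a\in A$), such that $\tau_B(b)=\tau(L_b)$ is a tracial state on $B$, left multiplication by elements of $A$ on $A/N_\tau$ is bounded (so extends to $L_2(A,\tau)$), and $E$ is completely positive on $A_\ell$ and on $A_r$. Here $N_\tau=\{a\in A:\tau(a^*a)=0\}$, $L_2(A,\tau)$ is the completion of $A/N_\tau$, and $L_2(B,\tau_B)$ is identified with the closure of $\{L_b+N_\tau : b\in B\}$ in $L_2(A,\tau)$ via the isometry $b+N_{\tau_B}\mapsto L_b+N_\tau$. For $a\in A$ the coset $a+N_\tau$ is denoted $a$, and for $b\in B$ the coset $b+N_{\tau_B}$ is denoted $\widehat{b}$. *)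

From mathcomp Require Import all_boot all_order all_algebra.
From mathcomp Require Import reals complex.
Set Implicit Arguments. Unset Strict Implicit. Unset Printing Implicit Defensive.
Import Order.TTheory GRing.Theory Num.Theory.
Local Open Scope ring_scope.

Section Defs.
Variable C : numClosedFieldType.

Definition is_star_alg (A : algType C) (s : A -> A) : Prop :=
  [/\ forall a, s (s a) = a,
      forall a b, s (a + b) = s a + s b,
      forall (c : C) a, s (c *: a) = c^* *: s a
    & forall a b, s (a * b) = s b * s a].

Definition mxstar (A : algType C) (s : A -> A) n (X : 'M[A]_n) : 'M[A]_n :=
  \matrix_(i, j) s (X j i).

Definition lin_fun (A : algType C) (f : A -> C) : Prop :=
  forall (c : C) a b, f (c *: a + b) = c * f a + f b.

Definition lin_map (A B : algType C) (f : A -> B) : Prop :=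
  forall (c : C) a b, f (c *: a + b) = c *: f a + f b.

Definition is_state (A : algType C) (s : A -> A) (tau : A -> C) : Prop :=
  [/\ lin_fun tau, tau 1 = 1 & forall a, 0 <= tau (s a * a)].

Definition is_tracial_state (A : algType C) (s : A -> A) (tau : A -> C) : Prop :=
  is_state s tau /\ forall a b, tau (a * b) = tau (b * a).

Definition cp_on (A B : algType C) (sA : A -> A) (sB : B -> B)
    (E : A -> B) (P : A -> Prop) : Prop :=
  forall n (X : 'M[A]_n), (forall i j, P (X i j)) ->
    exists Ys : seq 'M[B]_n,
      map_mx E (mxstar sA X *m X) = \sum_(Y <- Ys) (mxstar sB Y *m Y).

(* ---------- B-B-non-commutative probability spaces ----------
   The unital homomorphism eps : B (x) B^op -> A is given through its
   restrictions L_b = eps(b (x) 1) and R_b = eps(1 (x) b), i.e. a unital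
   homomorphism L : B -> A and a unital anti-homomorphism R : B -> A with
   commuting ranges; then eps(b1 (x) b2) = L b1 * R b2. *)
Definition BB_ncps (A B : algType C) (L R : B -> A) (E : A -> B) : Prop :=
  [/\ lin_map L, L 1 = 1 & forall b1 b2, L (b1 * b2) = L b1 * L b2] /\
  [/\ lin_map R, R 1 = 1 & forall b1 b2, R (b1 * b2) = R b2 * R b1] /\
  (forall b1 b2, L b1 * R b2 = R b2 * L b1) /\
  (injective L /\ injective R) /\
  lin_map E /\
  (forall b1 b2 T, E (L b1 * R b2 * T) = b1 * E T * b2) /\
  (forall T b, E (T * L b) = E (T * R b)).

Definition left_alg (A B : algType C) (R : B -> A) (T : A) : Prop :=
  forall b, T * R b = R b * T.
Definition right_alg (A B : algType C) (L : B -> A) (T : A) : Prop :=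
  forall b, T * L b = L b * T.

Definition analytical_BB_ncps (A B : algType C) (sA : A -> A) (sB : B -> B)
    (L R : B -> A) (E : A -> B) (tau : A -> C) : Prop :=
  (is_star_alg sA /\ is_star_alg sB) /\
  BB_ncps L R E /\
  (* eps is a *-homomorphism *)
  ((forall b, L (sB b) = sA (L b)) /\ (forall b, R (sB b) = sA (R b))) /\
  is_state sA tau /\
  (forall a, tau a = tau (L (E a)) /\ tau a = tau (R (E a))) /\
  (* tau_B(b) = tau(L_b) is a tracial state on B *)
  is_tracial_state sB (fun b => tau (L b)) /\
  (forall a, exists M : C, 0 <= M /\
     forall x, tau (sA (a * x) * (a * x)) <= M * tau (sA x * x)) /\
  (cp_on sA sB E (left_alg R) /\ cp_on sA sB E (right_alg L)).

Section Hilbert.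
Variable H : lmodType C.
Variable ip : H -> H -> C. (* linear in the first variable *)

Definition inner_product : Prop :=
  [/\ forall (c : C) x y z, ip (c *: x + y) z = c * ip x z + ip y z,
      forall x y, ip y x = (ip x y)^*,
      forall x, 0 <= ip x x
    & forall x, ip x x = 0 -> x = 0].

Definition sqdist (x y : H) : C := ip (x - y) (x - y).

Definition complete_ip : Prop :=
  forall u : nat -> H,
    (forall eps : C, 0 < eps -> exists N, forall m n,
        (N <= m)%N -> (N <= n)%N -> sqdist (u m) (u n) < eps) ->
    exists x, forall eps : C, 0 < eps -> exists N, forall n,
        (N <= n)%N -> sqdist (u n) x < eps.

Definition in_closure (S : H -> Prop) (x : H) : Prop :=
  forall eps : C, 0 < eps -> exists y, S y /\ sqdist x y < eps.

Definition orth_proj (K : H -> Prop) (P : H -> H) : Prop :=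
  forall x, K (P x) /\ forall k, K k -> ip (x - P x) k = 0.
End Hilbert.

(* (H, ip, iota) is (a model of) L_2(A, tau): H is a Hilbert space,
   iota : A -> H is linear with <iota a, iota a'> = tau(a'^* a) and dense
   range; so iota a is the coset a + N_tau inside the completion. *)
Definition L2_model (A : algType C) (sA : A -> A) (tau : A -> C)
    (H : lmodType C) (ip : H -> H -> C) (iota : A -> H) : Prop :=
  [/\ inner_product ip, complete_ip ip,
      forall (c : C) a b, iota (c *: a + b) = c *: iota a + iota b,
      forall a b, ip (iota a) (iota b) = tau (sA b * a)
    & forall x, in_closure ip (fun y => exists a, y = iota a) x].

End Defs.

From mathcomp Require Import all_boot all_order all_algebra.
From mathcomp Require Import reals complex.
From mathcomp Require Import ring.
Set Implicit Arguments. Unset Strict Implicit. Unset Printing Implicit Defensive.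
Import Order.TTheory GRing.Theory Num.Theory.
Local Open Scope ring_scope.

(* For b in B, <a - E(a)^, b^> = tau(L_{b^*} a) - tau(L_{b^* E(a)}), which
   vanishes because tau = tau o L o E and E(L_{b^*} a) = b^* E(a).  So
   a - E(a)^ is orthogonal to the dense subset { b^ } of L_2(B, tau_B), hence
   to all of it (Cauchy-Schwarz), while E(a)^ lies in L_2(B, tau_B); by
   uniqueness of the orthogonal decomposition, E~(a) = E(a)^.  Injectivity of
   b |-> b^ is ||b^||^2 = tau_B(b^* b). *)

Lemma raw_linearB (R : pzRingType) (V W : lmodType R) (f : V -> W) :
  linear f -> forall u v, f (u - v) = f u - f v.
Proof. by move=> lf u v; rewrite -scaleN1r addrC lf scaleN1r addrC. Qed.

Section InnerProduct.
Variables (C : numClosedFieldType) (H : lmodType C) (ip : H -> H -> C).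
Hypothesis hip : inner_product ip.

Lemma ipBl x y z : ip (x - y) z = ip x z - ip y z.
Proof.
case: hip => lin _ _ _.
by apply: (@raw_linearB _ H C^o (ip^~ z)) => c u v; apply: lin.
Qed.

Lemma ip0l z : ip 0 z = 0.
Proof. by rewrite -(subrr 0) ipBl subrr. Qed.

Lemma ipZl c x z : ip (c *: x) z = c * ip x z.
Proof. by case: hip => lin _ _ _; rewrite -[c *: x]addr0 lin ip0l addr0. Qed.

Lemma ipC x y : ip y x = (ip x y)^*.
Proof. by case: hip. Qed.

Lemma ipBr x y z : ip z (x - y) = ip z x - ip z y.
Proof. by rewrite ipC ipBl rmorphB /= -!ipC. Qed.

Lemma ipZr c x z : ip z (c *: x) = c^* * ip z x.
Proof. by rewrite ipC ipZl rmorphM /= -ipC. Qed.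

Lemma ip0r z : ip z 0 = 0.
Proof. by rewrite ipC ip0l conjC0. Qed.

Lemma ip_ge0 x : 0 <= ip x x.
Proof. by case: hip. Qed.

Lemma ip_eq0 x : ip x x = 0 -> x = 0.
Proof. by case: hip => _ _ _; apply. Qed.

Lemma ip_CauchySchwarz x y : `|ip x y| ^+ 2 <= ip x x * ip y y.
Proof.
have [x0|x_neq0] := eqVneq x 0; first by rewrite x0 ip0l ip0r normr0 expr0n mul0r.
have xx_gt0 : 0 < ip x x.
  by rewrite lt_def ip_ge0 andbT; apply: contra x_neq0 => /eqP /ip_eq0 ->.
have xx_real : (ip x x)^* = ip x x by rewrite geC0_conj ?ip_ge0.
have := ip_ge0 (ip x x *: y - ip y x *: x).
rewrite !ipBl !ipBr !ipZl !ipZr xx_real [ip x y]ipC.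
have -> : ip x x * (ip x x * ip y y) - ip x x * ((ip y x)^* * ip y x)
    - (ip y x * (ip x x * (ip y x)^*) - ip y x * ((ip y x)^* * ip x x))
    = ip x x * (ip x x * ip y y - ip y x * (ip y x)^*) by ring.
by rewrite pmulr_rge0 // subr_ge0 norm_conjC normCK.
Qed.

Lemma in_closure_self (S : H -> Prop) x : S x -> in_closure ip S x.
Proof. by move=> Sx e e_gt0; exists x; rewrite /sqdist subrr ip0l. Qed.

Lemma ip_closure_eq0 (S : H -> Prop) w k :
  (forall s, S s -> ip w s = 0) -> in_closure ip S k -> ip w k = 0.
Proof.
move=> wS kS; apply/eqP/negPn/negP => wk_neq0.
have ww_gt0 : 0 < ip w w.
  rewrite lt_def ip_ge0 andbT; apply: contra wk_neq0 => /eqP /ip_eq0 ->.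
  by rewrite ip0l.
have eps_gt0 : 0 < `|ip w k| ^+ 2 / ip w w.
  by rewrite divr_gt0 // exprn_gt0 // normr_gt0.
have [y [Sy ky]] := kS _ eps_gt0.
have := ip_CauchySchwarz w (k - y); rewrite ipBr (wS _ Sy) subr0 => CS.
move: ky; rewrite ltr_pdivlMr // mulrC => /(le_lt_trans CS).
by rewrite ltxx.
Qed.

Lemma orth_proj_closureE (S : H -> Prop) P x p :
  orth_proj ip (in_closure ip S) P -> in_closure ip S p ->
  (forall s, S s -> ip (x - p) s = 0) -> P x = p.
Proof.
move=> hP pS xpS; have [PxS Px_orth] := hP x.
have dS s : S s -> ip (P x - p) s = 0.
  move=> Ss; have -> : P x - p = (x - p) - (x - P x).
    by rewrite opprB [RHS]addrC addrA subrK.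
  by rewrite ipBl xpS // Px_orth ?subr0 //; apply: in_closure_self.
apply/eqP; rewrite -subr_eq0; apply/eqP/ip_eq0.
by rewrite ipBr !(ip_closure_eq0 dS) ?subr0.
Qed.

End InnerProduct.

Section AnalyticalSpace.
Variables (C : numClosedFieldType) (A B : algType C).
Variables (sA : A -> A) (sB : B -> B) (L Rm : B -> A) (E : A -> B).
Variable tau : A -> C.
Hypothesis hA : analytical_BB_ncps sA sB L Rm E tau.

Lemma L_sub b1 b2 : L (b1 - b2) = L b1 - L b2.
Proof. by case: hA => _ [[[lin _ _] _] _]; apply: raw_linearB. Qed.

Lemma L_mul b1 b2 : L (b1 * b2) = L b1 * L b2.
Proof. by case: hA => _ [[[_ _ ->]]]. Qed.

Lemma L_star b : L (sB b) = sA (L b).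
Proof. by case: hA => _ [_ [[->]]]. Qed.

Lemma tau_sub a1 a2 : tau (a1 - a2) = tau a1 - tau a2.
Proof.
case: hA => _ [_ [_ [[lin _ _] _]]].
by apply: (@raw_linearB _ A C^o) => c u v; apply: lin.
Qed.

Lemma tau_L_mulE b a : tau (L b * a) = tau (L (b * E a)).
Proof.
case: hA => _ [[_ [[_ R1 _] [_ [_ [_ [E_bimod _]]]]]] [_ [_ [compat _]]]].
have [-> _] := compat (L b * a).
by have := E_bimod b 1 a; rewrite R1 !mulr1 => ->.
Qed.

Section L2.
Variables (H : lmodType C) (ip : H -> H -> C) (iota : A -> H).
Hypothesis hL2 : L2_model sA tau ip iota.

Lemma L2_ip : inner_product ip.
Proof. by case: hL2. Qed.

Lemma iota_sub a1 a2 : iota (a1 - a2) = iota a1 - iota a2.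
Proof. by case: hL2 => _ _ lin _ _; apply: raw_linearB. Qed.

Lemma ip_iota a1 a2 : ip (iota a1) (iota a2) = tau (sA a2 * a1).
Proof. by case: hL2. Qed.

Lemma iota_sub_LE_orth a b : ip (iota a - iota (L (E a))) (iota (L b)) = 0.
Proof.
by rewrite -iota_sub ip_iota -L_star mulrBr -L_mul tau_sub tau_L_mulE subrr.
Qed.

Lemma iotaL_inj :
  (forall b, tau (L (sB b * b)) = 0 -> b = 0) -> injective (fun b => iota (L b)).
Proof.
move=> faithful b1 b2 /= eq_b; apply/eqP; rewrite -subr_eq0; apply/eqP/faithful.
by rewrite L_mul L_star -ip_iota L_sub iota_sub eq_b subrr (ip0l L2_ip).
Qed.

End L2.
End AnalyticalSpace.

(* L_2(B, tau_B) is modelled as the closure of { iota (L b) } inside the model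
   of L_2(A, tau), and b^ is iota (L b). *)
Theorem proposition3p7 (R : realType) (A B : algType R[i])
    (sA : A -> A) (sB : B -> B) (L Rm : B -> A) (E : A -> B) (tau : A -> R[i])
    (H : lmodType R[i]) (ip : H -> H -> R[i]) (iota : A -> H) (Et : H -> H) :
  analytical_BB_ncps sA sB L Rm E tau ->
  L2_model sA tau ip iota ->
  orth_proj ip (in_closure ip (fun y => exists b, y = iota (L b))) Et ->
  (forall a : A, Et (iota a) = iota (L (E a))) /\
  ((forall b : B, tau (L (sB b * b)) = 0 -> b = 0) ->
     injective (fun b : B => iota (L b))).
Proof.
move=> hA hL2 hEt; split.
  move=> a; apply: (orth_proj_closureE (L2_ip hL2) hEt).
  - by apply: (in_closure_self (L2_ip hL2)); exists (E a).
  - by move=> _ [b ->]; apply: (iota_sub_LE_orth hA hL2).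
by move=> faithful b1 b2; apply: (iotaL_inj hA hL2 faithful).
Qed.
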